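(* Let $n\ge2$, $\sigma\in\mathrm{NC}_n$ and $1\le i<n$. Then $\sigma s_i\in\mathrm{NC}_n$ if and only if $i\in\{\sigma(i),\sigma(i+1)\}$.
   Context: $s_i=(i,i+1)$ and $\sigma s_i$ denotes the composition $\sigma\circ s_i$. A set partition of $[n]$ is noncrossing if there are no distinct blocks $P,Q$ with $a,b\in P$, $c,d\in Q$, $a<c<b<d$. To a noncrossing partition associate the permutation $\sigma\in S_n$ which on each block $\{a_1<\dots<a_p\}$ acts by $\sigma(a_j)=a_{j-1}$ ($j\ge2$) and $\sigma(a_1)=a_p$. $\mathrm{NC}_n$ is the set of such permutations (noncrossing permutations); their cycles are the blocks. *)

(* [n] = {1,...,n} is modelled by 'I_n = {0,...,n-1}
   (order-preserving shift by one). *)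
From mathcomp Require Import all_boot all_order all_fingroup.
Set Implicit Arguments. Unset Strict Implicit. Unset Printing Implicit Defensive.

Definition set_partition (n : nat) (P : {set {set 'I_n}}) : Prop :=
  partition P [set: 'I_n].

Definition noncrossing (n : nat) (P : {set {set 'I_n}}) : Prop :=
  forall B C, B \in P -> C \in P -> B != C ->
  ~ exists a b c d : 'I_n,
      [/\ a \in B, b \in B, c \in C & d \in C] /\
      [/\ (a < c)%N, (c < b)%N & (b < d)%N].

(* y is the image of x under the permutation associated to the block B
   containing x: on B = {a_1 < ... < a_p}, a_j |-> a_{j-1} (j >= 2) and
   a_1 |-> a_p. *)
Definition block_image (n : nat) (B : {set 'I_n}) (x y : 'I_n) : Prop :=
  y \in B /\
  ((exists2 z, z \in B & (z < x)%N) ->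
     (y < x)%N /\ forall z, z \in B -> (z < x)%N -> (z <= y)%N) /\
  (~ (exists2 z, z \in B & (z < x)%N) ->
     forall z, z \in B -> (z <= y)%N).

Definition perm_of_partition (n : nat) (P : {set {set 'I_n}})
  (sigma : {perm 'I_n}) : Prop :=
  forall x : 'I_n, block_image (pblock P x) x (sigma x).

Definition NC (n : nat) (sigma : {perm 'I_n}) : Prop :=
  exists P : {set {set 'I_n}},
    [/\ set_partition P, noncrossing P & perm_of_partition P sigma].

From mathcomp Require Import all_boot all_order all_fingroup zify.
Set Implicit Arguments. Unset Strict Implicit. Unset Printing Implicit Defensive.

(* Encode a partition by its block relation R: sigma is in NC_n iff R is a
   noncrossing equivalence relation and sigma x is the cyclic predecessor of x
   in its block.  Right multiplication by s_i exchanges the images of i and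
   i+1.  If sigma (i+1) = i, then sigma s_i is the permutation of the partition
   in which i is split off as a singleton; if sigma i = i, it is that of the
   partition in which {i} joins the block of i+1, i.e. the pullback of R along
   the monotone map collapsing i onto i+1, which cannot create a crossing.
   Otherwise sigma i, i, i+1, sigma (i+1) are distinct and i, i+1 lie in
   different blocks both for sigma and for sigma s_i; as i and i+1 are
   adjacent, either the blocks {sigma i, i}, {i+1, sigma (i+1)} of sigma or the
   blocks {sigma i, i+1}, {i, sigma (i+1)} of sigma s_i cross. *)

(* z lies strictly inside the cyclic interval from y up to x; for y = x this
   is every z <> x. *)
Definition cyc_between (y z x : nat) : bool :=
  (y < x) && (y < z < x) || (x <= y) && ((z < x) || (y < z)).

(* For pairwise distinct points, the chords {a, b} and {c, d} cross iff
   [between a b c != between a b d]. *)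
Definition between (a b x : nat) : bool := (a < x < b) || (b < x < a).

Lemma between_succ_cross (a b b' d : nat) : b' = b.+1 ->
  a != b -> a != b' -> d != b -> d != b' -> a != d ->
  (between a b b' != between a b d) || (between a b' b != between a b' d).
Proof. by move=> ->; rewrite /between; lia. Qed.

Lemma cyc_between_succr (y z x : nat) : y != x -> z != x ->
  cyc_between y z x.+1 = cyc_between y z x.
Proof. by rewrite /cyc_between; lia. Qed.

Lemma cyc_between_succm (y z x : nat) : z.+1 != x ->
  cyc_between y z x -> cyc_between y z.+1 x.
Proof. by rewrite /cyc_between; lia. Qed.

Section NoncrossingRelations.

Variable n : nat.
Implicit Types (R : rel 'I_n) (s : {perm 'I_n}).

Record nc_equiv R : Prop := NcEquiv {
  nc_refl : reflexive R;
  nc_sym : symmetric R;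
  nc_trans : transitive R;
  nc_noncrossing : forall a b c d : 'I_n,
    (a < c < b)%N -> (b < d)%N -> R a b -> R c d -> R a c }.

Definition perm_of_rel R s : Prop :=
  forall x, R x (s x) /\ forall z, R x z -> ~~ cyc_between (s x) z x.

Lemma block_imageP (B : {set 'I_n}) (x y : 'I_n) :
  block_image B x y <-> y \in B /\ forall z, z \in B -> ~~ cyc_between y z x.
Proof.
rewrite /block_image /cyc_between; split.
- move=> [yB [below above]]; split=> // z zB.
  have [/existsP[w /andP[wB wx]]|/existsPn none] :=
    boolP [exists w, (w \in B) && (w < x)%N].
  + have [yx maxy] := below (ex_intro2 _ _ w wB wx).
    by have := maxy z zB; lia.
  + have nobelow : ~ exists2 w, w \in B & (w < x)%N.
      by move=> [w wB wx]; have := none w; rewrite wB wx.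
    have := none y; have := none z; rewrite yB zB /=.
    by have := above nobelow z zB; lia.
- move=> [yB gap]; split=> //; split.
  + move=> [w wB wx]; have := gap w wB; split=> [|z zB]; first by lia.
    by have := gap z zB; lia.
  + move=> nobelow z zB; have xy : (x <= y)%N.
      by rewrite leqNgt; apply/negP=> yx; apply: nobelow; exists y.
    by have := gap z zB; lia.
Qed.

Lemma NC_relP s : NC s <-> exists2 R, nc_equiv R & perm_of_rel R s.
Proof.
split.
- move=> [P [/and3P[/eqP cover triv _] nc perm]].
  have inP x : x \in pblock P x by rewrite mem_pblock cover inE.
  have sameP x y : (y \in pblock P x) = (pblock P x == pblock P y).
    by rewrite eq_pblock // cover inE.
  exists [rel x y | y \in pblock P x]; last by move=> x; apply/block_imageP.
  split=> /=.
  + exact: inP.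
  + by move=> x y /=; rewrite !sameP eq_sym.
  + by move=> y x z /=; rewrite !sameP => /eqP->.
  + move=> a b c d /andP[ac cb] bd Rab Rcd; apply/negPn/negP => nRac.
    apply: (nc (pblock P a) (pblock P c)); rewrite ?pblock_mem ?cover ?inE -?sameP //.
    by exists a, b, c, d; split; split; rewrite ?inP.
- move=> [R [Rr Rs Rt Rnc] sR].
  have eqR : {in [set: 'I_n] & &, equivalence_rel R}.
    move=> x y z _ _ _; split=> // Rxy; apply/idP/idP; last exact: Rt.
    by apply: Rt; rewrite Rs.
  have blockR := pblock_equivalence_partition eqR.
  have PR := equivalence_partitionP eqR; have /and3P[_ triv _] := PR.
  exists (equivalence_partition R [set: 'I_n]); split=> //.
  + move=> B C BP CP BC [a [b [c [d [[aB bB cB dB] [ac cb bd]]]]]].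
    have Rab : R a b by rewrite -blockR ?inE // (def_pblock triv BP aB).
    have Rcd : R c d by rewrite -blockR ?inE // (def_pblock triv CP cB).
    have Rac := Rnc a b c d (introT andP (conj ac cb)) bd Rab Rcd.
    have cB' : c \in B by rewrite -(def_pblock triv BP aB) blockR ?inE.
    by move: BC; rewrite -(def_pblock triv CP cB) -(def_pblock triv BP cB') eqxx.
  + move=> x; apply/block_imageP; rewrite blockR ?inE //.
    have [Rxsx gap] := sR x; split=> // z; rewrite blockR ?inE //; exact: gap.
Qed.

Section NcEquivTheory.

Variable R : rel 'I_n.
Hypothesis hR : nc_equiv R.

Lemma nc_equiv_cross (a b c d : 'I_n) :
  R a b -> R c d -> between a b c != between a b d -> R a c.
Proof.
case: hR => Rr Rs Rt Rnc.
wlog ab : a b / (a < b)%N.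
  move=> W Rab Rcd cross; case: (ltngtP a b) => [ab|ba|/val_inj eab].
  - exact: (W a b ab Rab Rcd cross).
  - apply: (Rt b _ _ Rab); apply: (W b a ba _ Rcd); first by rewrite Rs.
    by move: cross; rewrite /between; lia.
  - by move: cross; rewrite eab /between; lia.
wlog cd : c d / (c < d)%N.
  move=> W Rab Rcd cross; case: (ltngtP c d) => [cd|dc|/val_inj ecd].
  - exact: (W c d cd Rab Rcd cross).
  - apply: (Rt d a c); last by rewrite Rs.
    apply: (W d c dc Rab); first by rewrite Rs.
    by move: cross; rewrite /between; lia.
  - by move: cross; rewrite ecd /between; lia.
wlog ac : a b c d ab cd / (a < c)%N.
  move=> W Rab Rcd cross; case: (ltngtP a c) => [ac|ca|/val_inj <-].
  - exact: (W a b c d ab cd ac Rab Rcd cross).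
  - rewrite Rs; apply: (W c d a b cd ab ca Rcd Rab).
    by move: cross; rewrite /between; lia.
  - exact: Rr.
move=> Rab Rcd; case: (ltngtP c b) => [cb|bc|/val_inj -> //].
  case: (ltngtP b d) => [bd|db|/val_inj edb] cross.
  - by apply: Rnc Rab Rcd; rewrite ?ac.
  - by move: cross; rewrite /between; lia.
  - by apply: (Rt b a c Rab); rewrite Rs edb.
by rewrite /between; lia.
Qed.

Lemma perm_of_rel_succ s (x x' : 'I_n) : perm_of_rel R s ->
  x' = x.+1 :> nat -> R x x' -> s x' = x.
Proof.
move=> sR hx' Rxx'; have [_ gap] := sR x'.
have := gap x; rewrite (nc_sym hR) Rxx' => /(_ isT).
by rewrite /cyc_between hx' => nbetween; apply/val_inj => /=; lia.
Qed.

End NcEquivTheory.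

Lemma nc_equiv_relpre R (f : 'I_n -> 'I_n) : nc_equiv R ->
  (forall x y : 'I_n, (x <= y)%N -> (f x <= f y)%N) -> nc_equiv (relpre f R).
Proof.
move=> [Rr Rs Rt Rnc] f_mono; split=> /=.
- by move=> x; apply: Rr.
- by move=> x y; apply: Rs.
- by move=> y x z; apply: Rt.
move=> a b c d /andP[ac cb] bd Rab Rcd.
have := f_mono _ _ (ltnW ac); rewrite leq_eqVlt => /orP[/eqP/val_inj <- //|fac].
have := f_mono _ _ (ltnW cb); rewrite leq_eqVlt => /orP[/eqP/val_inj -> //|fcb].
have := f_mono _ _ (ltnW bd); rewrite leq_eqVlt => /orP[/eqP/val_inj fbd|fbd].
  by apply: (Rt (f b)); rewrite // Rs fbd.
by apply: Rnc Rab Rcd; rewrite ?fac.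
Qed.

Definition split_rel R (k : 'I_n) : rel 'I_n :=
  [rel x y | R x y && ((x == k) == (y == k))].

Lemma nc_equiv_split R k : nc_equiv R -> nc_equiv (split_rel R k).
Proof.
move=> [Rr Rs Rt Rnc]; rewrite /split_rel; split=> /=.
- by move=> x /=; rewrite Rr eqxx.
- by move=> x y /=; rewrite Rs eq_sym.
- move=> y x z /= /andP[Rxy /eqP->] /andP[Ryz /eqP->].
  by rewrite (Rt _ _ _ Rxy Ryz) eqxx.
move=> a b c d acb bd /andP[Rab /eqP ab] /andP[Rcd /eqP cd].
have off (x y : 'I_n) : (x < y)%N -> (x == k) = (y == k) -> (x == k) = false.
  case: (eqVneq x k) => [-> xy /esym/eqP yk|/negbTE //].
  by move: xy; rewrite yk ltnn.
case/andP: (acb) => ac cb.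
rewrite (Rnc _ _ _ _ acb bd Rab Rcd) (off a b (ltn_trans ac cb) ab).
by rewrite (off c d (ltn_trans cb bd) cd).
Qed.

End NoncrossingRelations.

Section AdjacentTransposition.

Variables (n : nat) (i i' : 'I_n).
Hypothesis hi' : i' = i.+1 :> nat.

Let neq_i_i' : i != i'.
Proof. by apply/eqP => /(congr1 val) /=; rewrite hi'; lia. Qed.

Lemma NC_tperm_mul_cases (R Q : rel 'I_n) (s : {perm 'I_n}) :
  nc_equiv R -> perm_of_rel R s ->
  nc_equiv Q -> perm_of_rel Q (tperm i i' * s)%g -> i = s i \/ i = s i'.
Proof.
move=> hR sR hQ sQ.
have [e|si] := eqVneq (s i) i; first by left; rewrite e.
have [e|si'] := eqVneq (s i') i; first by right; rewrite e.
have tau_i : (tperm i i' * s)%g i = s i' by rewrite permM tpermL.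
have tau_i' : (tperm i i' * s)%g i' = s i by rewrite permM tpermR.
have nRii' : ~~ R i i'.
  by apply: contra si' => /(perm_of_rel_succ hR sR hi') ->.
have nQii' : ~~ Q i i'.
  by apply: contra si => /(perm_of_rel_succ hQ sQ hi'); rewrite tau_i' => ->.
have [Risi _] := sR i.
have Rsi : R (s i) i by rewrite (nc_sym hR).
have Rsi' : R i' (s i') by case: (sR i').
have Qsi : Q (s i) i' by rewrite (nc_sym hQ) -tau_i'; case: (sQ i').
have Qsi' : Q i (s i') by rewrite -tau_i; case: (sQ i).
have si_i' : s i != i' by apply: contraNneq nRii' => <-; rewrite (nc_sym hR).
have si'_i' : s i' != i' by apply: contraNneq nQii' => <-.
have si_si' : s i != s i'.
  apply: contraNneq nRii' => e; apply: (nc_trans hR Risi).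
  by rewrite e (nc_sym hR).
case/orP: (between_succ_cross hi' si si_i' si' si'_i' si_si').
- move=> /(nc_equiv_cross hR Rsi Rsi') Rsii'; case/negP: nRii'.
  exact: (nc_trans hR Risi Rsii').
- move=> /(nc_equiv_cross hQ Qsi Qsi'); rewrite (nc_sym hQ) => Qisi.
  by case/negP: nQii'; exact: (nc_trans hQ Qisi Qsi).
Qed.

Lemma perm_of_rel_split (R : rel 'I_n) (s : {perm 'I_n}) :
  nc_equiv R -> perm_of_rel R s -> s i' = i ->
  perm_of_rel (split_rel R i) (tperm i i' * s)%g.
Proof.
move=> hR sR si'i x; rewrite permM /split_rel /=.
have [->|xi] := eqVneq x i.
  rewrite tpermL si'i nc_refl // eqxx; split=> // z /andP[_ /eqP/esym/eqP ->].
  by rewrite /cyc_between; lia.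
have [->|xi'] := eqVneq x i'.
  have si_i : s i != i by rewrite -[X in _ != X]si'i (inj_eq perm_inj).
  have Ri'i : R i' i by rewrite -[X in R _ X]si'i; case: (sR i').
  have [Risi gap] := sR i.
  rewrite tpermR (negbTE si_i); split.
    by rewrite (nc_trans hR Ri'i Risi).
  move=> z /andP[Ri'z /eqP/esym/negbT zi].
  have Riz : R i z by apply: (nc_trans hR _ Ri'z); rewrite (nc_sym hR).
  by rewrite hi' cyc_between_succr //; apply: gap.
have sxi : s x != i by rewrite -si'i (inj_eq perm_inj).
rewrite tpermD; [|by rewrite eq_sym|by rewrite eq_sym].
have [Rxsx gap] := sR x; rewrite (negbTE sxi) Rxsx.
by split=> // z /andP[/gap].
Qed.

Definition collapse_succ (x : 'I_n) : 'I_n := if x == i then i' else x.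

Lemma collapse_succ_mono (x y : 'I_n) :
  (x <= y)%N -> (collapse_succ x <= collapse_succ y)%N.
Proof.
rewrite /collapse_succ; have [-> | _] := eqVneq x i.
  have [-> | yi] := eqVneq y i; first by [].
  by have : (y : nat) != i := yi; lia.
by case: eqP => [-> | _]; lia.
Qed.

Lemma perm_of_rel_merge (R : rel 'I_n) (s : {perm 'I_n}) :
  nc_equiv R -> perm_of_rel R s -> s i = i ->
  perm_of_rel (relpre collapse_succ R) (tperm i i' * s)%g.
Proof.
move=> hR sR sii x; rewrite permM /= /collapse_succ.
have [->|xi] := eqVneq x i.
  have si'i : s i' != i by rewrite -sii (inj_eq perm_inj) eq_sym.
  have [Ri'si' gap] := sR i'.
  rewrite tpermL (negbTE si'i); split=> // z.
  have [-> _|zi] := eqVneq z i; first by rewrite /cyc_between; lia.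
  by rewrite -cyc_between_succr // -hi' => /gap.
have [->|xi'] := eqVneq x i'.
  rewrite tpermR sii eqxx nc_refl //; split=> // z _.
  by rewrite /cyc_between hi'; lia.
have sxi : s x != i by rewrite -sii (inj_eq perm_inj).
rewrite tpermD; [|by rewrite eq_sym|by rewrite eq_sym].
have [Rxsx gap] := sR x; rewrite (negbTE sxi); split=> // z.
have [->|_] := eqVneq z i => Rxz; last exact: gap.
apply: contra (gap i' Rxz); rewrite hi'; apply: cyc_between_succm.
by rewrite -hi' eq_sym.
Qed.

End AdjacentTransposition.

Theorem lemma7p4 (n : nat) (hn : (2 <= n)%N) (sigma : {perm 'I_n})
  (i i' : 'I_n) (hi' : nat_of_ord i' = (nat_of_ord i).+1) :
  NC sigma ->
  (NC (tperm i i' * sigma)%g <-> (i = sigma i \/ i = sigma i')).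
Proof.
(* [hn] is redundant: [i' : 'I_n] with [i' = i.+1] already forces [2 <= n]. *)
move=> /NC_relP[R hR sR]; split.
  by move=> /NC_relP[Q hQ sQ]; apply: NC_tperm_mul_cases hR sR hQ sQ.
move=> [/esym sii | /esym si'i]; apply/NC_relP.
  exists (relpre (collapse_succ i i') R).
    exact: nc_equiv_relpre hR (collapse_succ_mono hi').
  exact: perm_of_rel_merge.
exists (split_rel R i); first exact: nc_equiv_split.
exact: perm_of_rel_split.
Qed.
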